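(* Let $X$ and $Y$ be finite $T_0$-spaces. If $X$ and $Y$ are simple homotopy equivalent, then $|\det(X_M)|=|\det(Y_M)|$.
   Context: A finite $T_0$-space is identified with a finite poset via $x\le y$ iff $U_x\subseteq U_y$, where $U_x$ is the minimal open set containing $x$. For a labelling $X=\{x_1,\dots,x_n\}$, $X_M=(x_{i,j})$ is the $n\times n$ matrix with $x_{i,j}=0$ if $x_i\le x_j$ and $x_{i,j}=1$ otherwise. A point $x$ is a weak beat point if $\{y:y<x\}$ is contractible or $\{y:y>x\}$ is contractible. Two finite $T_0$-spaces are simple homotopy equivalent if one can be obtained from the other (up to homeomorphism) by a finite sequence of adding and removing weak beat points one at a time. *)

From Stdlib Require Import Reals Relations.
From mathcomp Require Import all_boot all_order all_algebra.
Set Implicit Arguments. Unset Strict Implicit. Unset Printing Implicit Defensive.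
Import GRing.Theory Num.Theory.

(* A finite T0-space, identified with the finite poset (X, <=) where
   x <= y iff U_x \subseteq U_y.  Its minimal open sets are U_x = {y | y <= x}
   and its open sets are the down-sets. *)
Record FinT0 := {
  pt :> finType;
  ple : rel pt;
  ple_refl : reflexive ple;
  ple_anti : antisymmetric ple;
  ple_trans : transitive ple
}.

Definition plt (X : FinT0) (x y : X) : bool := (x != y) && ple x y.

(* Contractibility of the subspace A of the finite T0-space X:
   A is nonempty and the identity of A is homotopic to a constant map,
   i.e. there is a continuous H : A x [0,1] -> A with H(-,0) = id and
   H(-,1) = const c.  Continuity is written out: the preimage of every
   basic open set U_a \cap A (a \in A) is open in the product A x [0,1],
   whose basic open sets are (U_y \cap A) x (ball \cap [0,1]). *)
Definition contractible (X : FinT0) (A : {set X}) : Prop :=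
  exists c : X, c \in A /\
  exists H : X -> R -> X,
    (forall x t, x \in A -> Rle R0 t -> Rle t R1 -> H x t \in A) /\
    (forall x, x \in A -> H x R0 = x) /\
    (forall x, x \in A -> H x R1 = c) /\
    (forall a x t, a \in A -> x \in A -> Rle R0 t -> Rle t R1 ->
        ple (H x t) a ->
        exists eps : R, Rlt R0 eps /\
          forall y s, y \in A -> ple y x -> Rle R0 s -> Rle s R1 ->
            Rlt (Rabs (Rminus s t)) eps -> ple (H y s) a).

Definition weak_beat_point (X : FinT0) (x : X) : Prop :=
  contractible [set y | plt y x] \/ contractible [set y | plt x y].

(* Homeomorphism of finite T0-spaces = order isomorphism. *)
Definition homeomorphic (X Y : FinT0) : Prop :=
  exists f : X -> Y, bijective f /\ forall a b, ple (f a) (f b) = ple a b.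

Definition wbp_removal (X Y : FinT0) : Prop :=
  exists x : X, weak_beat_point x /\
  exists f : Y -> X, injective f /\
    (forall z : X, z != x <-> exists y, f y = z) /\
    forall a b, ple (f a) (f b) = ple a b.

Definition she_step (X Y : FinT0) : Prop := homeomorphic X Y \/ wbp_removal X Y.

Definition simple_homotopy_equivalent (X Y : FinT0) : Prop :=
  clos_refl_sym_trans FinT0 she_step X Y.

Definition XM (X : FinT0) (n : nat) (f : 'I_n -> X) : 'M[int]_n :=
  \matrix_(i, j) (if ple (f i) (f j) then 0%R else 1%R).

From Stdlib Require Import Reals Relations Classical Lra.
From mathcomp Require Import all_boot all_order all_algebra.
Import GRing.Theory Num.Theory.
Local Open Scope ring_scope.

(* Let psi(A) be the sum of (-1)^|S| over the chains S of A, the empty chain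
   included.  Expanding the zeta matrix of a labelling along the row of a
   maximal element gives det X_M = (-1)^n psi(X).  By the link formula
   psi(A) = psi(A \ x) - psi(A_<x) psi(A_>x), removing a weak beat point x
   leaves psi unchanged as soon as psi vanishes on contractible spaces.  A
   homotopy from the identity to a constant map gives, by compactness and
   connectedness of [0, 1], a fence of comparable monotone maps.  Removing beat
   points one at a time preserves both psi and such a fence; once no beat point
   is left, every map fenced to the identity is the identity, so the space is a
   point and psi = 1 - 1 = 0. *)

Section UnitInterval.
Local Open Scope R_scope.

(* The supremum of the parameters [t] such that [F 0] is linked to every [F s],
   [s <= t], is itself linked, and a neighbourhood of it then shows it is [1]. *)
Lemma unit_interval_chain (T : Type) (rel : relation T) (F : R -> T) :
  (forall t, 0 <= t <= 1 -> exists2 e, 0 < e &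
     forall s, 0 <= s <= 1 -> Rabs (s - t) < e -> rel (F s) (F t)) ->
  clos_refl_sym_trans T rel (F 0) (F 1).
Proof.
move=> loc; pose linked s := clos_refl_sym_trans T rel (F 0) (F s).
pose E t := 0 <= t <= 1 /\ forall s, 0 <= s <= t -> linked s.
have E0 : E 0.
  split=> [|s Hs]; first lra.
  have -> : s = 0 by lra.
  exact: rst_refl.
have bndE : bound E by exists 1 => t [[_ ?] _].
have [Tm [ubT lubT]] := completeness E bndE (ex_intro _ 0 E0).
have T01 : 0 <= Tm <= 1 by split; [apply: ubT | apply: lubT => t [[_ ?] _]].
have [e e0 He] := loc Tm T01.
have [t0 [[t0_01 Ht0] t0e]] : exists t0, E t0 /\ Tm - e < t0.
  apply: NNPP => nE; suff : Tm <= Tm - e by lra.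
  by apply: lubT => t Et; apply: Rnot_lt_le => lt; apply: nE; exists t.
have t0T : t0 <= Tm by apply: ubT.
have linked_Tm : linked Tm.
  apply: rst_trans (Ht0 t0 _) _; first lra.
  by apply: rst_step; apply: He; [lra | apply: Rabs_def1; lra].
have near_Tm s : 0 <= s <= 1 -> Rabs (s - Tm) < e -> linked s.
  by move=> s01 hs; apply: rst_trans linked_Tm _; apply/rst_sym/rst_step; exact: He.
case: (Rlt_or_le (1 - Tm) e) => h1; first by apply: near_Tm; [lra | apply: Rabs_def1; lra].
suff /ubT : E (Tm + e / 2) by lra.
split=> [|s s0]; first lra.
case: (Rle_or_lt s t0) => hs; first by apply: Ht0; lra.
by apply: near_Tm; [lra | apply: Rabs_def1; lra].
Qed.

Lemma common_radius {T : eqType} (t : R) (P : T -> R -> Prop) (l : seq T) :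
  (forall x, x \in l -> exists2 e, 0 < e & forall s, Rabs (s - t) < e -> P x s) ->
  exists2 e, 0 < e & forall x, x \in l -> forall s, Rabs (s - t) < e -> P x s.
Proof.
elim: l => [|x l IH] H; first by exists 1; [lra | move=> x].
have [e1 e10 H1] := H x (mem_head x l).
have [e2 e20 H2] : exists2 e, 0 < e & forall y, y \in l -> forall s, Rabs (s - t) < e -> P y s.
  by apply: IH => y hy; apply: H; rewrite in_cons hy orbT.
exists (Rmin e1 e2) => [|y]; first exact: Rmin_glb_lt.
rewrite in_cons => /predU1P[->|hy] s hs.
  by apply: H1; apply: Rlt_le_trans hs (Rmin_l _ _).
by apply: H2 => //; apply: Rlt_le_trans hs (Rmin_r _ _).
Qed.

End UnitInterval.

Lemma clos_rst_flip (T : Type) (R S : relation T) :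
  (forall x y, R x y -> S y x) ->
  forall x y, clos_refl_sym_trans T R x y -> clos_refl_sym_trans T S x y.
Proof.
move=> RS x y; elim=> {x y} [x y /RS xy|x|x y _ IH|x y z _ IH1 _ IH2].
- exact/rst_sym/rst_step.
- exact: rst_refl.
- exact: rst_sym.
- exact: rst_trans IH1 IH2.
Qed.

Section Chains.
Context {X : FinT0}.
Implicit Types (a b x y : X) (A P S : {set X}).

Lemma pltW {a b} : plt a b -> ple a b.
Proof. by case/andP. Qed.

Lemma plt_irr a : plt a a = false.
Proof. by rewrite /plt eqxx. Qed.

Lemma plt_nge {a b} : plt a b -> ~~ ple b a.
Proof.
case/andP=> ne ab; apply: contra ne => ba.
by rewrite (@ple_anti X a b) ?ab ?ba.
Qed.

Lemma card_down_lt {a b} : plt a b -> (#|[set z | ple z a]| < #|[set z | ple z b]|)%N.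
Proof.
move=> ab; apply: proper_card; apply/properP; split.
  by apply/subsetP => z; rewrite !inE => /ple_trans; apply; exact: pltW.
by exists b; rewrite !inE ?ple_refl // plt_nge.
Qed.

Lemma plt_ind (P : X -> Prop) :
  (forall a, (forall b, plt b a -> P b) -> P a) -> forall a, P a.
Proof.
move=> IH a; have [k] := ubnP #|[set z | ple z a]|; elim: k a => // k IHk a ka.
by apply: IH => b /card_down_lt ba; apply: IHk; exact: leq_trans ba ka.
Qed.

Lemma exists_maximal A : A != set0 -> exists2 m, m \in A & {in A, forall y, ~~ plt m y}.
Proof.
case/set0Pn => a aA.
case: (arg_maxnP (fun m => #|[set z | ple z m]|) aA) => m mA mmax.
exists m => // y yA; apply/negP => /card_down_lt.
by rewrite ltnNge => /negP; apply; exact: mmax.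
Qed.

Lemma ple_pltE a b : ple a b = (a == b) || plt a b.
Proof. by rewrite /plt; case: eqVneq => [->|]; rewrite ?ple_refl. Qed.

Definition chain S := [forall a in S, forall b in S, ple a b || ple b a].

Lemma chainP S : reflect {in S &, forall a b, ple a b || ple b a} (chain S).
Proof.
apply: (iffP forall_inP) => H.
  by move=> a b aS bS; exact: (forall_inP (H a aS) b bS).
by move=> a aS; apply/forall_inP => b bS; exact: H.
Qed.

Lemma chain_sub S S' : S \subset S' -> chain S' -> chain S.
Proof. by move=> /subsetP sub /chainP H; apply/chainP => a b /sub aS /sub bS; exact: H. Qed.

(* [psi A] is minus the reduced Euler characteristic of the order complex of [A]. *)
Definition psi A : int := \sum_(S : {set X} | (S \subset A) && chain S) (-1) ^+ #|S|.

Definition below A x := [set y in A | plt y x].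
Definition above A x := [set y in A | plt x y].

Lemma psi0 : psi set0 = 1.
Proof.
rewrite /psi (big_pred1 set0) ?cards0 // => S /=; rewrite subset0.
by case: eqP => // ->; apply/chainP => a b; rewrite inE.
Qed.

Section Link.
Context {A : {set X}} {x : X}.
Hypothesis xA : x \in A.

Lemma below_above_disjoint y : y \in below A x -> y \in above A x -> False.
Proof. by rewrite !inE => /andP[_ yx] /andP[_ /pltW xy]; move: xy; apply/negP/plt_nge. Qed.

Lemma link_chain (S1 S2 : {set X}) : S1 \subset below A x -> S2 \subset above A x ->
  chain S1 -> chain S2 -> chain (S1 :|: (x |: S2)).
Proof.
move=> /subsetP s1 /subsetP s2 /chainP c1 /chainP c2; apply/chainP => a b.
have lx z : z \in S1 -> ple z x by move=> /s1; rewrite inE => /andP[_ /pltW].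
have xu z : z \in S2 -> ple x z by move=> /s2; rewrite inE => /andP[_ /pltW].
rewrite !inE => /or3P[aS|/eqP->|aS] /or3P[bS|/eqP->|bS].
- exact: c1.
- by rewrite lx.
- by rewrite (ple_trans (lx _ aS) (xu _ bS)).
- by rewrite lx ?orbT.
- by rewrite ple_refl.
- by rewrite xu.
- by rewrite (ple_trans (lx _ bS) (xu _ aS)) orbT.
- by rewrite xu ?orbT.
- exact: c2.
Qed.

Lemma link_below (S1 S2 : {set X}) : S1 \subset below A x -> S2 \subset above A x ->
  (S1 :|: (x |: S2)) :&: below A x = S1.
Proof.
move=> /subsetP s1 /subsetP s2; apply/setP => y; rewrite !inE.
case yS1: (y \in S1); first by have := s1 _ yS1; rewrite inE => ->.
case: eqVneq => [->|_]; first by rewrite plt_irr !andbF.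
case yS2: (y \in S2) => //=; apply/negP => yb.
by apply: (below_above_disjoint y); rewrite ?s2 ?inE.
Qed.

Lemma link_above (S1 S2 : {set X}) : S1 \subset below A x -> S2 \subset above A x ->
  (S1 :|: (x |: S2)) :&: above A x = S2.
Proof.
move=> /subsetP s1 /subsetP s2; apply/setP => y; rewrite !inE.
case yS2: (y \in S2); first by have := s2 _ yS2; rewrite inE !orbT => ->.
case: eqVneq => [->|_]; first by rewrite plt_irr !andbF.
case yS1: (y \in S1) => //=; apply/negP => ya.
by apply: (below_above_disjoint y); rewrite ?s1 ?inE.
Qed.

Lemma card_link (S1 S2 : {set X}) : S1 \subset below A x -> S2 \subset above A x ->
  #|S1 :|: (x |: S2)| = (#|S1| + #|S2|).+1.
Proof.
move=> /subsetP s1 /subsetP s2.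
have xS2 : x \notin S2 by apply/negP => /s2; rewrite inE plt_irr andbF.
suff dis : S1 :&: (x |: S2) = set0 by rewrite cardsU dis cardsU1 xS2 cards0 subn0 addnS.
apply/setP => y; rewrite !inE; apply/negP => /andP[/s1 yb /predU1P[eyx|/s2 ya]].
  by move: yb; rewrite eyx inE plt_irr andbF.
exact: below_above_disjoint yb ya.
Qed.

Lemma chain_link S : S \subset A -> chain S -> x \in S ->
  (S :&: below A x) :|: (x |: (S :&: above A x)) = S.
Proof.
move=> /subsetP SA /chainP ch xS; apply/setP => y; rewrite !inE.
case: (eqVneq y x) => [->|yx]; first by rewrite xS !orbT.
case yS: (y \in S); rewrite ?andbF //= SA //=.
have /orP[yx'|xy'] := ch y x yS xS; first by rewrite /plt yx yx'.
by rewrite /plt [x == y]eq_sym yx xy' orbT.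
Qed.

Lemma psi_link : psi A = psi (A :\ x) - psi (below A x) * psi (above A x).
Proof.
rewrite {1}/psi (bigID (fun S : {set X} => x \in S)) /= addrC; congr (_ + _).
  by apply: eq_bigl => S; rewrite subsetD1 andbAC.
rewrite -[LHS]opprK -sumrN; congr (- _).
rewrite /psi mulr_suml; under [RHS]eq_bigr do rewrite mulr_sumr.
rewrite pair_big /=.
pose join (p : {set X} * {set X}) := p.1 :|: (x |: p.2).
pose split S := (S :&: below A x, S :&: above A x).
rewrite (reindex_onto join split) => [|S /andP[/andP[SA ch] xS]]; last first.
  exact: chain_link.
have split_sub p : split (join p) = p -> p.1 \subset below A x /\ p.2 \subset above A x.
  by move=> E; rewrite -E !subsetIr.
apply: eq_big => [[S1 S2]|[S1 S2] /andP[_ /eqP/split_sub[s1 s2]]] /=; last first.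
  by rewrite card_link // exprS exprD mulN1r opprK.
apply/idP/idP => [/andP[/andP[/andP[_ ch] _] /eqP/split_sub[s1 s2]]|].
  rewrite s1 s2 !(chain_sub _ _ _ ch) // /join /= ?subsetUl //.
  by rewrite subsetU // subsetU1 orbT.
case/and3P => /andP[s1 c1] s2 c2.
rewrite /join /split /= link_chain // link_below // link_above // eqxx !inE eqxx orbT.
rewrite !subUset sub1set xA (subset_trans s1) ?(subset_trans s2) //.
  by rewrite /above setIdE subsetIl.
by rewrite /below setIdE subsetIl.
Qed.

End Link.

Definition down_closed P A := forall a b, a \in A -> b \in P -> ple b a -> b \in A.

Lemma below_sub A x : below A x \subset A.
Proof. by rewrite /below setIdE subsetIl. Qed.

Lemma down_closed_below P x : down_closed P (below P x).
Proof.
move=> a b; rewrite !inE => /andP[_ ax] -> ba /=.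
rewrite /plt (ple_trans ba (pltW ax)) andbT.
by apply/eqP => bx; move: ax; rewrite -bx => /plt_nge; rewrite ba.
Qed.

Lemma down_closedD1 {P A x} : {in P, forall y, ~~ plt x y} -> A \subset P ->
  down_closed P A -> down_closed P (A :\ x).
Proof.
move=> xmax /subsetP AP Adown a b; rewrite !inE => /andP[ax aA] bP ba.
rewrite (Adown a b aA bP ba) andbT; apply: contraNneq ax => bx.
by move: ba; rewrite bx ple_pltE (negPf (xmax a (AP a aA))) orbF => /eqP ->.
Qed.

Lemma psi_maximal {P A x} : x \in A -> A \subset P -> down_closed P A ->
  {in P, forall y, ~~ plt x y} -> psi A = psi (A :\ x) - psi (below P x).
Proof.
move=> xA /subsetP AP Adown xmax; rewrite (psi_link xA).
have -> : below A x = below P x.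
  apply/setP => b; rewrite !inE; apply/andP/andP => [[/AP]|[bP bx]] //.
  by split=> //; exact: Adown _ _ xA bP (pltW bx).
have -> : above A x = set0.
  by apply/setP => b; rewrite !inE; apply/negP => /andP[/AP/xmax/negPf ->].
by rewrite psi0 mulr1.
Qed.

Definition has_max A := exists2 m, m \in A & forall y, y \in A -> ple y m.

Lemma psi_has_max A : has_max A -> psi A = 0.
Proof.
case=> m mA Hm; rewrite (psi_maximal mA (subxx A)) // => [|y yA]; last first.
  by apply: contraL (Hm y yA); exact: plt_nge.
suff -> : below A m = A :\ m by rewrite subrr.
apply/setP => y; rewrite !inE /plt.
by case yA: (y \in A); rewrite ?andbF // (Hm _ yA) andbT.
Qed.

Definition down_beat A b := b \in A /\ has_max (below A b).

Lemma psi_down_beat {A b} : down_beat A b -> psi A = psi (A :\ b).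
Proof. by case=> bA /psi_has_max psi_b; rewrite (psi_link bA) psi_b mul0r subr0. Qed.

End Chains.

Definition dual (X : FinT0) : FinT0 :=
  {| pt := X; ple := fun a b => ple b a; ple_refl := @ple_refl X;
     ple_anti := fun a b ab => @ple_anti X a b (etrans (andbC _ _) ab);
     ple_trans := fun b a c ba cb => ple_trans cb ba |}.

Section Duality.
Context {X : FinT0}.
Implicit Types (A : {set X}).

Lemma psi_dual A : @psi (dual X) A = psi A.
Proof.
apply: eq_bigl => S; congr (_ && _).
by apply/chainP/chainP => ch a b aS bS; rewrite orbC; apply: ch.
Qed.

Lemma psi_up_beat {A b} : @down_beat (dual X) A b -> psi A = psi (A :\ b).
Proof. by rewrite -!psi_dual; apply: psi_down_beat. Qed.

End Duality.

Section DeterminantTools.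
Context {R : comRingType}.

Lemma det_delta_row {n} (A : 'M[R]_n.+1) k :
  (forall j, A k j = (k == j)%:R) -> \det A = \det (row' k (col' k A)).
Proof.
move=> Ak; rewrite (expand_det_row _ k) (bigD1 k) //= big1 ?addr0.
  by rewrite Ak eqxx mul1r /cofactor -signr_odd oddD addbb mul1r.
by move=> j /negbTE; rewrite Ak eq_sym => ->; rewrite mul0r.
Qed.

Lemma det_zero_col {n} (A : 'M[R]_n) k : (forall i, A i k = 0) -> \det A = 0.
Proof. by move=> Ak; rewrite (expand_det_col _ k) big1 // => i _; rewrite Ak mul0r. Qed.

Lemma det_add_row_multiples {n} (A : 'M[R]_n.+1) k (c : 'I_n.+1 -> R) : c k = 0 ->
  \det (\matrix_(i, j) (A i j + c i * A k j)) = \det A.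
Proof.
move=> ck; pose E : 'M[R]_n.+1 := \matrix_(i, j) ((i == j)%:R + (j == k)%:R * c i).
have -> : \matrix_(i, j) (A i j + c i * A k j) = E *m A.
  apply/matrixP => i j; rewrite !mxE.
  under eq_bigr do rewrite mxE mulrDl.
  rewrite big_split /= (bigD1 i) //= big1 => [|l /negbTE li]; last by rewrite eq_sym li mul0r.
  rewrite eqxx mul1r addr0 (bigD1 k) //= big1 => [|l /negbTE lk]; last by rewrite lk !mul0r.
  by rewrite eqxx mul1r addr0.
suff detE : \det E = 1 by rewrite det_mulmx detE mul1r.
rewrite (det_delta_row _ k) => [|j]; last by rewrite mxE ck mulr0 addr0.
rewrite -(det1 _ n); congr (\det _); apply/matrixP => i j.
rewrite !mxE (inj_eq (@lift_inj _ k)) [lift k j == k]eq_sym (negbTE (neq_lift k j)).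
by rewrite mul0r addr0.
Qed.

End DeterminantTools.

Section ZetaMatrix.
Context {X : FinT0}.

Definition img {n} (f : 'I_n -> X) : {set X} := [set f i | i : 'I_n].

Definition zeta_mx {n} (f : 'I_n -> X) (A : {set X}) : 'M[int]_n :=
  \matrix_(i, j) ((ple (f i) (f j))%:R - (f i \in A)%:R).

Lemma img_lift {n} (f : 'I_n.+1 -> X) k : injective f -> img (f \o lift k) = img f :\ f k.
Proof.
move=> finj; apply/setP => z; rewrite !inE; apply/imsetP/andP => [[i _ ->]|[nz]].
  by rewrite (inj_eq finj) [lift k i == k]eq_sym neq_lift; split => //; apply: imset_f.
case/imsetP=> i _ zi; have ik : k != i by apply: contraNneq nz => ->; rewrite zi.
by case: (unlift_some ik) => i' ei _; exists i'; rewrite //= -ei.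
Qed.

Lemma det_zeta_mx_lift {n} (f : 'I_n.+1 -> X) k (A : {set X}) :
  (forall j, ple (f k) (f j) -> k = j) -> f k \notin A ->
  \det (zeta_mx f A) = \det (zeta_mx (f \o lift k) A).
Proof.
move=> kmax kA; rewrite (det_delta_row _ k) => [|j].
  by congr (\det _); apply/matrixP => i j; rewrite !mxE.
have kjE : ple (f k) (f j) = (k == j) by apply/idP/eqP => [/kmax|<-] //; exact: ple_refl.
by rewrite mxE kjE (negPf kA) subr0.
Qed.

Lemma det_zeta_mx_setU1 {n} (f : 'I_n.+1 -> X) k (B C : {set X}) : injective f ->
  f k \notin B -> f k \notin C ->
  \det (zeta_mx f (f k |: B)) - \det (zeta_mx f B) =
  \det (zeta_mx f (f k |: C)) - \det (zeta_mx f C).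
Proof.
(* Both sides are minus the determinant of the zeta matrix whose row [k] is all ones. *)
move=> finj; pose Z1 := \matrix_(i, j) (if i == k then 1 else (ple (f i) (f j))%:R : int).
suff incr (B' : {set X}) : f k \notin B' ->
    \det (zeta_mx f (f k |: B')) - \det (zeta_mx f B') = - \det Z1.
  by move=> /incr -> /incr ->.
move=> kB; pose ZB := \matrix_(i, j) (if i == k then 1 else zeta_mx f B' i j).
have row'E : row' k (zeta_mx f B') = row' k (zeta_mx f (f k |: B')).
  apply/matrixP => i j; rewrite !mxE !inE (inj_eq finj) [lift k i == k]eq_sym.
  by rewrite (negPf (neq_lift k i)).
rewrite (@determinant_multilinear _ _ _ (zeta_mx f B') ZB k 1 (-1)); first last.
- by rewrite -row'E; apply/matrixP => i j; rewrite !mxE eq_sym (negPf (neq_lift k i)).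
- by rewrite row'E.
- apply/rowP => j; rewrite !mxE !eqxx (negPf kB) setU11 subr0.
  by rewrite mul1r mulN1r.
rewrite mul1r mulN1r addrAC subrr add0r; congr (- _).
rewrite -(@det_add_row_multiples _ _ Z1 k (fun i => if i == k then 0 else - (f i \in B')%:R)).
  by congr (\det _); apply/matrixP => i j; rewrite !mxE; case: eqP; rewrite ?eqxx ?mulr1.
by rewrite eqxx.
Qed.

Lemma det_zeta_mx {n} (f : 'I_n -> X) (A : {set X}) : injective f ->
  A \subset img f -> down_closed (img f) A -> \det (zeta_mx f A) = psi A.
Proof.
elim: n f A => [|n IHn] f A finj Asub Adown.
  rewrite det_mx00; suff -> : A = set0 by rewrite psi0.
  by apply/setP => a; rewrite inE; apply/negP => /(subsetP Asub) /imsetP[[]].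
have imgf i : f i \in img f by apply: imset_f.
have [_ /imsetP[k _ ->] fk_max] : exists2 y, y \in img f & {in img f, forall z, ~~ plt y z}.
  by apply: exists_maximal; apply/set0Pn; exists (f ord0).
have kmax j : ple (f k) (f j) -> k = j.
  by rewrite ple_pltE (negPf (fk_max _ (imgf j))) orbF => /eqP; exact: finj.
have IHk (B : {set X}) : B \subset img f -> down_closed (img f) B -> f k \notin B ->
    \det (zeta_mx f B) = psi B.
  move=> /subsetP Bsub Bdown kB; rewrite (det_zeta_mx_lift _ _ _ kmax kB).
  apply: IHn => [|| a b aB]; first exact: inj_comp finj (@lift_inj _ k).
    apply/subsetP => b bB; rewrite img_lift // !inE Bsub // andbT.
    by apply: contraNneq kB => <-.
  by rewrite img_lift // !inE => /andP[_]; exact: Bdown aB.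
have [kA|kA] := boolP (f k \in A); last exact: IHk.
(* Compare adding [f k] to [A :\ f k] with adding it to [D]: the cone [f k |: D]
   has a zero column, which turns det_zeta_mx_setU1 into psi_maximal. *)
pose D := below (img f) (f k).
have kD : f k \notin D by rewrite inE plt_irr andbF.
have kA' : f k \notin A :\ f k by rewrite setD11.
have detD1 : \det (zeta_mx f (f k |: D)) = 0.
  apply: (det_zero_col _ k) => i; rewrite !mxE !inE imgf ple_pltE /=.
  by rewrite (inj_eq finj) subrr.
have A'sub : A :\ f k \subset img f := subset_trans (subD1set _ _) Asub.
have A'down := down_closedD1 fk_max Asub Adown.
have := det_zeta_mx_setU1 f k (A :\ f k) D finj kA' kD.
rewrite setD1K // detD1 sub0r (IHk _ A'sub A'down kA').
rewrite (IHk _ (below_sub _ _) (down_closed_below _ _) kD) => /eqP.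
by rewrite subr_eq addrC -(psi_maximal kA Asub Adown fk_max) => /eqP.
Qed.

Lemma det_XM {n} (f : 'I_n -> X) : injective f -> \det (XM f) = (-1) ^+ n * psi (img f).
Proof.
move=> finj; have -> : XM f = - zeta_mx f (img f).
  apply/matrixP => i j; rewrite !mxE imset_f //.
  by case: ple; rewrite ?subrr ?oppr0 // sub0r opprK.
by rewrite -scaleN1r detZ det_zeta_mx.
Qed.

End ZetaMatrix.

Lemma XM_comp {X Y : FinT0} {n} (f : 'I_n -> Y) {g : Y -> X} :
  (forall a b, ple (g a) (g b) = ple a b) -> XM (g \o f) = XM f.
Proof. by move=> gple; apply/matrixP => i j; rewrite !mxE /= gple. Qed.

Section Fences.
Context {X : FinT0}.
Implicit Types (A : {set X}) (h g : X -> X).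

Definition monotone_on A h :=
  {in A, forall a, h a \in A} /\ {in A &, forall a b, ple a b -> ple (h a) (h b)}.

Definition le_maps A h g :=
  [/\ monotone_on A h, monotone_on A g & {in A, forall a, ple (h a) (g a)}].

Definition fenced A := clos_refl_sym_trans (X -> X) (le_maps A).

Definition fence_contractible A := exists2 c, c \in A & fenced A id (fun=> c).

Lemma deflation_id A g : monotone_on A g -> {in A, forall a, ple (g a) a} ->
  (forall b, ~ down_beat A b) -> {in A, forall a, g a = a}.
Proof.
case=> gA gmon gle nob a; elim/(@plt_ind X): a => a IH aA.
case: (eqVneq (g a) a) => // ne; exfalso; apply: (nob a); split => //.
exists (g a) => [|y]; first by rewrite inE gA // /plt ne gle.
by rewrite inE => /andP[yA ya]; rewrite -(IH y ya yA); apply: gmon => //; exact: pltW.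
Qed.

Lemma fenced_retract {A A' r h g} : {subset A' <= A} -> {in A, forall a, r a \in A'} ->
  {in A &, forall a b, ple a b -> ple (r a) (r b)} ->
  fenced A h g -> fenced A' (r \o h) (r \o g).
Proof.
move=> sub rA rmon; have rmon_on k : monotone_on A k -> monotone_on A' (r \o k).
  case=> kA kmon; split=> [a /sub aA|a b /sub aA /sub bA ab]; first exact/rA/kA.
  by apply: rmon; [exact: kA | exact: kA | exact: kmon].
elim=> {h g} [h g [hm gm hg]||h g _ IH|h g k _ IH1 _ IH2].
- apply: rst_step; split; [exact: rmon_on | exact: rmon_on |].
  by move=> a /sub aA; apply: rmon; [exact: hm.1 | exact: gm.1 | exact: hg].
- by move=> h; exact: rst_refl.
- exact: rst_sym.
- exact: rst_trans IH1 IH2.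
Qed.

Lemma fence_contractible_down_beat {A b} : down_beat A b ->
  fence_contractible A -> fence_contractible (A :\ b).
Proof.
case=> bA [m]; rewrite inE => /andP[mA mb] mmax [c cA fAc].
pose r z := if z == b then m else z.
have sub : {subset A :\ b <= A} by move=> a /setD1P[].
have rA : {in A, forall a, r a \in A :\ b}.
  move=> a aA; rewrite /r !inE; case: (eqVneq a b) => [_|-> //].
  by rewrite mA andbT; case/andP: mb.
have rmon : {in A &, forall a1 a2, ple a1 a2 -> ple (r a1) (r a2)}.
  move=> a1 a2 a1A a2A; rewrite /r.
  case: (eqVneq a1 b) => [->|a1b]; case: (eqVneq a2 b) => [->|a2b] //.
  - by move=> _; exact: ple_refl.
  - by move/(ple_trans (pltW mb)).
  - by move=> a1b'; apply: mmax; rewrite inE a1A /plt a1b.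
exists (r c); first exact: rA.
apply: rst_trans (fenced_retract sub rA rmon fAc).
apply/rst_sym/rst_step; split.
- by split=> [a /sub/rA|a1 a2 /sub a1A /sub a2A]; last exact: rmon.
- by split=> // a1 a2 _ _.
- by move=> a /setD1P[ab _]; rewrite /= /r (negPf ab); exact: ple_refl.
Qed.

End Fences.

Section FenceDuality.
Context {X : FinT0}.
Implicit Types (A : {set X}) (h g : X -> X).

Lemma monotone_on_dual A h : @monotone_on (dual X) A h <-> monotone_on A h.
Proof. by split=> -[hA hmon]; split=> // a b aA bA; exact: hmon. Qed.

Lemma fenced_dual A h g : @fenced (dual X) A h g <-> fenced A h g.
Proof.
by split; apply: clos_rst_flip => h' g' [/monotone_on_dual hm /monotone_on_dual gm hg].
Qed.

Lemma fence_contractible_dual A : @fence_contractible (dual X) A <-> fence_contractible A.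
Proof. by split=> -[c cA /fenced_dual fc]; exists c. Qed.

Lemma inflation_id A g : monotone_on A g -> {in A, forall a, ple a (g a)} ->
  (forall b, ~ @down_beat (dual X) A b) -> {in A, forall a, g a = a}.
Proof. by move/monotone_on_dual; exact: (@deflation_id (dual X)). Qed.

Lemma fenced_id A h g : (forall b, ~ down_beat A b) -> (forall b, ~ @down_beat (dual X) A b) ->
  fenced A h g -> {in A, forall a, h a = a} -> {in A, forall a, g a = a}.
Proof.
move=> nod nou; suff iff_id h' g' : fenced A h' g' ->
    ({in A, forall a, h' a = a} <-> {in A, forall a, g' a = a}).
  by move=> /iff_id [].
elim=> {h' g'} [h' g' [hm gm hg]|//|h' g' _ [IH1 IH2]|h' g' k' _ [IH1 IH2] _ [IH3 IH4]].
- split=> [hid|gid].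
    by apply: inflation_id => // a aA; rewrite -{1}(hid a aA); exact: hg.
  by apply: deflation_id => // a aA; rewrite -{2}(gid a aA); exact: hg.
- by split.
- by split=> ?; [apply/IH3/IH1 | apply/IH2/IH4].
Qed.

Lemma fence_contractible_psi A : fence_contractible A -> psi A = 0.
Proof.
have [k] := ubnP #|A|; elim: k A => // k IH A Ak fA.
have card_lt b : b \in A -> (#|A :\ b| < k)%N by move=> bA; rewrite (cardsD1 b A) bA in Ak.
case: (classic (exists b, down_beat A b)) => [[b db]|nodown].
  rewrite (psi_down_beat db) IH //; first by apply: card_lt; case: db.
  exact: fence_contractible_down_beat.
case: (classic (exists b, @down_beat (dual X) A b)) => [[b ub]|noup].
  rewrite (psi_up_beat ub) IH //; first by apply: card_lt; case: ub.
  apply/fence_contractible_dual/fence_contractible_down_beat => //.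
  exact/fence_contractible_dual.
case: fA => c cA fc; apply: psi_has_max; exists c => // y yA.
have cid : {in A, forall a, c = a}.
  by apply: fenced_id fc _ => [b db|b ub|//]; [apply: nodown | apply: noup]; exists b.
by rewrite -(cid y yA) ple_refl.
Qed.

End FenceDuality.

Section ContractibleSpaces.
Context {X : FinT0}.
Local Open Scope R_scope.

Lemma contractible_fence (A : {set X}) : contractible A -> fence_contractible A.
Proof.
case=> c [cA [H [Hin [H0 [H1 Hc]]]]]; exists c => //.
have Ht_mon t : 0 <= t <= 1 -> monotone_on A (fun x => H x t).
  move=> [t0 t1]; split=> [a aA|a b aA bA ab]; first exact: Hin.
  have [e [e0 He]] := Hc (H b t) b t (Hin b t bA t0 t1) bA t0 t1 (ple_refl _).
  by apply: He ab t0 t1 _ => //; rewrite Rminus_eq_0 Rabs_R0.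
have loc t : 0 <= t <= 1 -> exists2 e, 0 < e & forall s, 0 <= s <= 1 ->
    Rabs (s - t) < e -> le_maps A (fun x => H x s) (fun x => H x t).
  move=> [t0 t1].
  have [x|e e0 He] := common_radius t (fun x s => 0 <= s <= 1 -> ple (H x s) (H x t)) (enum A).
    rewrite mem_enum => xA.
    have [e [e0 He]] := Hc (H x t) x t (Hin x t xA t0 t1) xA t0 t1 (ple_refl _).
    by exists e => // s hs [s0 s1]; exact: He xA (ple_refl _) s0 s1 hs.
  exists e => // s s01 hs; split; [exact: Ht_mon | exact: Ht_mon |].
  by move=> a aA; apply: He; rewrite ?mem_enum.
have idH0 : le_maps A id (fun x => H x 0).
  split=> [|| a aA]; [by split | apply: Ht_mon; lra |].
  by rewrite H0 //; exact: ple_refl.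
have H1c : le_maps A (fun x => H x 1) (fun=> c).
  split=> [|| a aA]; [apply: Ht_mon; lra | by split=> // a b _ _ _; exact: ple_refl |].
  by rewrite H1 //; exact: ple_refl.
apply: rst_trans (rst_step _ _ _ _ idH0) _; apply: rst_trans (rst_step _ _ _ _ H1c).
exact: unit_interval_chain loc.
Qed.

End ContractibleSpaces.

Lemma psi_contractible {X : FinT0} (A : {set X}) : contractible A -> psi A = 0.
Proof. by move/contractible_fence/fence_contractible_psi. Qed.

Lemma abs_det_XM {X : FinT0} {n} {f : 'I_n -> X} :
  bijective f -> `|\det (XM f)| = `|psi [set: X]|.
Proof.
move=> fbij; rewrite det_XM ?normrM ?normr_sign ?mul1r; last exact: bij_inj.
congr `|psi _|; apply/setP => z; rewrite inE; case: fbij => g _ gK.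
by rewrite -[z]gK; exact: imset_f.
Qed.

Lemma psi_weak_beat_point {X : FinT0} {x : X} :
  weak_beat_point x -> psi [set: X] = psi ([set: X] :\ x).
Proof.
rewrite (psi_link (in_setT x)).
have -> : below [set: X] x = [set y | plt y x] by apply/setP => y; rewrite !inE.
have -> : above [set: X] x = [set y | plt x y] by apply/setP => y; rewrite !inE.
by case=> /psi_contractible ->; rewrite ?mul0r ?mulr0 subr0.
Qed.

Lemma she_step_psi (X Y : FinT0) : she_step X Y -> `|psi [set: X]| = `|psi [set: Y]|.
Proof.
have eXbij := @enum_val_bij X; have eYbij := @enum_val_bij Y.
case=> [[h [hbij hple]]|[x [wbp [g [ginj [gim gple]]]]]].
  by rewrite -(abs_det_XM eXbij) -(abs_det_XM (bij_comp hbij eXbij)) XM_comp.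
rewrite -(abs_det_XM eYbij) -(XM_comp _ gple) det_XM; last exact/inj_comp/bij_inj.
rewrite normrM normr_sign mul1r (psi_weak_beat_point wbp); congr `|psi _|.
apply/setP => z; rewrite /img !inE andbT; apply/idP/imsetP => [/gim[y <-]|[i _ ->]].
  by case: eYbij => e' _ e'K; exists (e' y); rewrite //= e'K.
by apply/gim; exists (enum_val i).
Qed.

Theorem mainTheorem6 (X Y : FinT0) (n m : nat) (fX : 'I_n -> X) (fY : 'I_m -> Y) :
  bijective fX -> bijective fY ->
  simple_homotopy_equivalent X Y ->
  `|\det (XM fX)| = `|\det (XM fY)|.
Proof.
move=> bX bY she; rewrite (abs_det_XM bX) (abs_det_XM bY).
elim: she => {X Y n m fX fY bX bY} [X Y /she_step_psi //|//|X Y _ ->|X Y Z _ -> _ ->] //.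
Qed.
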